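(* Let $G$ be a discrete group, $\mathfrak g$ a finite string of elements of $G$ and $\mathcal E$ a finite partition of $G$. Suppose the graph $\Gamma(G,\mathfrak g,\mathcal E)$ has a directed edge from a vertex $A=(a_C)_{C\in Con(\mathfrak g,\mathcal E)}$ to a vertex $B=(b_C)_{C\in Con(\mathfrak g,\mathcal E)}$ such that $a_C\in\{0,1\}$ and $b_C-a_C>0$ for every $C\in Con(\mathfrak g,\mathcal E)$. Then $G$ admits a paradoxical decomposition (whose pieces are subsets of the sets $x_0(C)$ and their translates).
   Context: Configurations: for $\mathfrak g=(g_1,\dots,g_n)$ and a partition $\mathcal E=\{E_1,\dots,E_m\}$ of $G$, a configuration is $C=(c_0,\dots,c_n)\in\{1,\dots,m\}^{n+1}$ such that some $x\in G$ has $x\in E_{c_0}$ and $g_ix\in E_{c_i}$ ($1\le i\le n$); $Con(\mathfrak g,\mathcal E)$ is the finite set of configurations, and $x_0(C)=E_{c_0}\cap\bigcap_{j=1}^ng_j^{-1}E_{c_j}$; the sets $x_0(C)$ partition $G$. The graph $\Gamma=\Gamma(G,\mathfrak g,\mathcal E)$: its vertices are all tuples $(a_C)_{C\in Con(\mathfrak g,\mathcal E)}$ of nonnegative integers. There is a directed edge from $A=(a_C)$ to $B=(b_C)$ if the set $\bigsqcup_{C:\,a_C\neq0}x_0(C)$ admits a partition into $b=\sum_Cb_C$ pieces, indexed as $\{A_{C,k}: C\in Con(\mathfrak g,\mathcal E),\,1\le k\le b_C\}$, together with elements $h_{C,k}\in G$ such that $h_{C,k}A_{C,k}=x_0(C)$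 for every $C$ and every $1\le k\le b_C$. A paradoxical decomposition of $G$: pairwise disjoint subsets $A_1,\dots,A_r,B_1,\dots,B_s$ of $G$ and elements $a_i,b_j\in G$ with $G=\bigcup_ia_iA_i=\bigcup_jb_jB_j$. *)

From mathcomp Require Import all_boot.
Set Implicit Arguments. Unset Strict Implicit. Unset Printing Implicit Defensive.

Record group := Group {
  carrier :> Type;
  mul : carrier -> carrier -> carrier;
  one : carrier;
  inv : carrier -> carrier;
  mulA : forall x y z, mul x (mul y z) = mul (mul x y) z;
  mul1g : forall x, mul one x = x;
  mulVg : forall x, mul (inv x) x = one
}.

(* Candidate configurations C = (c_0, ..., c_n), c_i in {0..m-1}
   (0-indexed version of {1..m}).  A string g = (g_1..g_n) is g : 'I_n -> G,
   with g_{i+1} = g i; the partition E = {E_0,...,E_{m-1}} of G is given by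
   its labelling function E : G -> 'I_m (x \in E_j iff E x = j). *)
Definition conf_type (n m : nat) := {ffun 'I_n.+1 -> 'I_m}.

Definition x0 (G : group) (n m : nat) (g : 'I_n -> G) (E : G -> 'I_m)
  (C : conf_type n m) : G -> Prop :=
  fun x => E x = C ord0 /\ forall i : 'I_n, E (mul (g i) x) = C (lift ord0 i).

Definition is_config (G : group) (n m : nat) (g : 'I_n -> G) (E : G -> 'I_m)
  (C : conf_type n m) : Prop := exists x, x0 g E C x.

(* Directed edge A -> B in Gamma(G, g, E); vertices are tuples indexed by Con,
   represented as functions conf_type n m -> nat (only values on Con matter).
   Pieces A_{C,k} are indexed by k < b_C (0-indexed). *)
Definition gamma_edge (G : group) (n m : nat) (g : 'I_n -> G) (E : G -> 'I_m)
  (a b : conf_type n m -> nat) : Prop :=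
  exists (P : conf_type n m -> nat -> G -> Prop) (h : conf_type n m -> nat -> G),
    (forall C k C' k', is_config g E C -> is_config g E C' ->
       k < b C -> k' < b C' -> (C, k) <> (C', k') ->
       forall x, P C k x -> P C' k' x -> False) /\
    (forall x, (exists C, [/\ is_config g E C, a C <> 0 & x0 g E C x]) <->
               (exists C k, [/\ is_config g E C, k < b C & P C k x])) /\
    (forall C k, is_config g E C -> k < b C ->
       forall y, x0 g E C y <-> exists x, P C k x /\ mul (h C k) x = y).

Definition paradoxical (G : group) : Prop :=
  exists (r s : nat) (A : 'I_r -> G -> Prop) (B : 'I_s -> G -> Prop)
         (a : 'I_r -> G) (b : 'I_s -> G),
    [/\ (forall i j, i <> j -> forall x, A i x -> A j x -> False),
        (forall i j, i <> j -> forall x, B i x -> B j x -> False),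
        (forall i j x, A i x -> B j x -> False),
        (forall y, exists i x, A i x /\ mul (a i) x = y) &
        (forall y, exists j x, B j x /\ mul (b j) x = y)].

From Pilot Require Import Defs.
From mathcomp Require Import all_boot.

(* Every configuration C receives b_C >= 1 pieces, and an active one (a_C = 1)
   at least two.  Translating the first piece of every C onto x_0(C) covers G.
   The second pieces of the active C, together with the sets x_0(C) of the
   inactive C (which meet no piece, since the pieces tile the active x_0's),
   cover G a second time and are disjoint from the first pieces. *)

Lemma paradoxical_finType {G : group} {I J : finType}
    {A : I -> G -> Prop} {B : J -> G -> Prop} {a : I -> G} {b : J -> G} :
  (forall i j, i <> j -> forall x, A i x -> A j x -> False) ->
  (forall i j, i <> j -> forall x, B i x -> B j x -> False) ->
  (forall i j x, A i x -> B j x -> False) ->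
  (forall y, exists i x, A i x /\ Defs.mul (a i) x = y) ->
  (forall y, exists j x, B j x /\ Defs.mul (b j) x = y) ->
  paradoxical G.
Proof.
move=> disA disB disAB covA covB.
exists #|I|, #|J|, (A \o enum_val), (B \o enum_val), (a \o enum_val), (b \o enum_val).
split=> [i j ne | i j ne | i j | y | y] /=.
- by apply: disA => /enum_val_inj.
- by apply: disB => /enum_val_inj.
- exact: disAB.
- by have [i [x ?]] := covA y; exists (enum_rank i), x; rewrite enum_rankK.
- by have [j [x ?]] := covB y; exists (enum_rank j), x; rewrite enum_rankK.
Qed.

Section Configurations.

Variables (G : group) (n m : nat) (g : 'I_n -> G) (E : G -> 'I_m).

Lemma x0_inj (C C' : conf_type n m) x : x0 g E C x -> x0 g E C' x -> C = C'.
Proof.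
move=> [h0 h1] [h0' h1']; apply/ffunP => i.
by case: (unliftP ord0 i) => [j ->|->]; [rewrite -h1 h1' | rewrite -h0 h0'].
Qed.

Definition conf_of (y : G) : conf_type n m :=
  [ffun i => if unlift ord0 i is Some j then E (Defs.mul (g j) y) else E y].

Lemma x0_conf_of y : x0 g E (conf_of y) y.
Proof.
split=> [|i]; rewrite ffunE; first by rewrite unlift_none.
by rewrite liftK.
Qed.

Lemma is_config_conf_of y : is_config g E (conf_of y).
Proof. by exists y; apply: x0_conf_of. Qed.

End Configurations.

Arguments x0_inj {G n m g E C C' x}.
Arguments conf_of {G n m}.
Arguments x0_conf_of {G n m}.
Arguments is_config_conf_of {G n m}.

Section ParadoxicalFromEdge.

Variables (G : group) (n m : nat) (g : 'I_n -> G) (E : G -> 'I_m).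
Variables (a b : conf_type n m -> nat).
Variables (P : conf_type n m -> nat -> G -> Prop) (h : conf_type n m -> nat -> G).

Local Notation config := (is_config g E).
Local Notation x0 := (x0 g E).

Hypothesis a01 : forall C, config C -> a C = 0 \/ a C = 1.
Hypothesis a_lt_b : forall C, config C -> a C < b C.
Hypothesis P_disjoint : forall C k C' k', config C -> config C' ->
  k < b C -> k' < b C' -> (C, k) <> (C', k') ->
  forall x, P C k x -> P C' k' x -> False.
Hypothesis P_cover : forall x,
  (exists C, [/\ config C, a C <> 0 & x0 C x]) <->
  (exists C k, [/\ config C, k < b C & P C k x]).
Hypothesis P_image : forall C k, config C -> k < b C ->
  forall y, x0 C y <-> exists x, P C k x /\ Defs.mul (h C k) x = y.

Lemma b_gt0 {C} : config C -> 0 < b C.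
Proof. by move=> /a_lt_b; case: (b C). Qed.

Lemma b_gt1 {C} : config C -> a C <> 0 -> 1 < b C.
Proof. by move=> hC; have := a_lt_b _ hC; case: (a01 _ hC) => ->. Qed.

Lemma piece_in_active {C C' k x} :
  config C' -> k < b C' -> P C' k x -> x0 C x -> a C <> 0.
Proof.
move=> hC' hk hP hx.
have [C'' [_ aC'' hx'']] : exists C'', [/\ config C'', a C'' <> 0 & x0 C'' x].
  by apply/P_cover; exists C', k.
by rewrite (x0_inj hx hx'').
Qed.

Definition first_piece C x := config C /\ P C 0 x.

Definition second_piece C x :=
  config C /\ if a C == 0 then x0 C x else P C 1 x.

Definition second_shift C := if a C == 0 then Defs.one G else h C 1.

Lemma first_pieces_disjoint C C' : C <> C' ->
  forall x, first_piece C x -> first_piece C' x -> False.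
Proof.
move=> ne x [hC pC] [hC' pC'].
by apply: (P_disjoint _ _ _ _ hC hC' (b_gt0 hC) (b_gt0 hC') _ x pC pC') => -[].
Qed.

Lemma second_pieces_disjoint C C' : C <> C' ->
  forall x, second_piece C x -> second_piece C' x -> False.
Proof.
move=> ne x [hC pC] [hC' pC']; move: pC pC'.
case: eqP => aC; case: eqP => aC' pC pC'.
- exact: ne (x0_inj pC pC').
- exact: (piece_in_active hC' (b_gt1 hC' aC') pC' pC).
- exact: (piece_in_active hC (b_gt1 hC aC) pC pC').
- apply: (P_disjoint _ _ _ _ hC hC' (b_gt1 hC aC) (b_gt1 hC' aC') _ x pC pC').
  by case.
Qed.

Lemma first_second_disjoint C C' x :
  first_piece C x -> second_piece C' x -> False.
Proof.
move=> [hC pC] [hC' pC']; move: pC'; case: eqP => aC' pC'.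
  exact: (piece_in_active hC (b_gt0 hC) pC pC').
by apply: (P_disjoint _ _ _ _ hC hC' (b_gt0 hC) (b_gt1 hC' aC') _ x pC pC') => -[].
Qed.

Lemma first_pieces_cover y :
  exists C x, first_piece C x /\ Defs.mul (h C 0) x = y.
Proof.
have hc := is_config_conf_of g E y.
have [x [px <-]] := (P_image _ _ hc (b_gt0 hc) y).1 (x0_conf_of g E y).
by exists (conf_of g E y), x.
Qed.

Lemma second_pieces_cover y :
  exists C x, second_piece C x /\ Defs.mul (second_shift C) x = y.
Proof.
have hc := is_config_conf_of g E y.
exists (conf_of g E y); rewrite /second_piece /second_shift.
case: eqP => aC.
  by exists y; rewrite Defs.mul1g; split=> //; split=> //; apply: x0_conf_of.
have [x [px hx]] := (P_image _ _ hc (b_gt1 hc aC) y).1 (x0_conf_of g E y).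
by exists x.
Qed.

Lemma paradoxical_of_pieces : paradoxical G.
Proof.
exact: (paradoxical_finType first_pieces_disjoint second_pieces_disjoint
  first_second_disjoint first_pieces_cover second_pieces_cover).
Qed.

End ParadoxicalFromEdge.

Arguments paradoxical_of_pieces {G n m g E a b P h}.

Theorem proposition4p2 (G : group) (n m : nat) (g : 'I_n -> G) (E : G -> 'I_m)
  (E_nonempty : forall j : 'I_m, exists x, E x = j)
  (a b : conf_type n m -> nat)
  (ha01 : forall C, is_config g E C -> a C = 0 \/ a C = 1)
  (hab : forall C, is_config g E C -> a C < b C)
  (hedge : gamma_edge g E a b) :
  paradoxical G.
Proof.
have [P [h [P_disjoint [P_cover P_image]]]] := hedge.
exact: (paradoxical_of_pieces ha01 hab P_disjoint P_cover P_image).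
Qed.
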